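(* Let $\alpha$ be an increasing sequence in $\{1,\dots,m\}$. If $a,b\in\mathcal{S}_\alpha$, then the product stream $a\cdot b$ lies in $\mathcal{S}_\alpha$ (in particular it is finite, monotonic and reduced at every level of nesting).
   Context: Fix a semiring $R$, an integer $m\ge1$, and finite nonempty totally ordered sets $I_1,\dots,I_m$; $i::\alpha$ denotes the sequence with head $i$ and tail $\alpha$. An indexed stream of type $I\to V$ is a tuple $(S,q,\iota,\nu,\mathrm{ready},\delta)$: state space $S$, current state $q\in S$, $\iota:S\to I$, $\nu:S\to V$, $\mathrm{ready}:S\to\{\bot,\top\}$, $\delta:S\to S$; ''the stream $r$'' is the same tuple with current state $r$. $r$ is reachable from $q$ if $r=\delta^k(q)$, $k\ge0$; terminal if $\delta(r)=r$. $q$ is simple if: (Finite) some state reachable from $q$ is terminal and every reachable terminal $t$ has $\mathrm{ready}(t)=\bot$; (Monotonic) $\iota(r)\le\iota(\delta(r))$ for all $r$ reachable from $q$; (Reduced) if $r$ is reachable from $q$, $s$ reachable from $r$, $\mathrm{ready}(r)=\mathrm{ready}(s)=\top$ and $\iota(r)=\iota(s)$, then $r=s$. Nested streams: $\mathcal{S}_{[]}=R$; $\mathcal{S}_{i::\alpha}$ is the collection of simple streams of type $I_i\to\mathcal{S}_\alpha$. Ordering on stream states $a,b$ of the same index type: $a\le b$ iff $\iota(a)<\iota(b)$ or ($\iota(a)=\iota(b)$ and $\mathrm{ready}(a)=\bot$). Product stream: given streams $a,b$ of type $I\to V$ and a multiplication $\cdot:V\times V\to V$, $a\cdot b$ has state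 space $S_a\times S_b$, current state $(a,b)$, and $\iota(a,b)=\max(\iota(a),\iota(b))$, $\nu(a,b)=\nu(a)\cdot\nu(b)$, $\mathrm{ready}(a,b)=\mathrm{ready}(a)\wedge\mathrm{ready}(b)\wedge(\iota(a)=\iota(b))$, and $\delta(a,b)=(\delta(a),b)$ if $a\le b$, otherwise $(a,\delta(b))$. Multiplication on $\mathcal{S}_\alpha$ is defined recursively: on $\mathcal{S}_{[]}=R$ it is the semiring product; on $\mathcal{S}_{i::\alpha}$ it is the product stream using the multiplication of $\mathcal{S}_\alpha$ on values. *)

From HB Require Import structures.
From mathcomp Require Import all_boot all_order all_algebra.
Set Implicit Arguments. Unset Strict Implicit. Unset Printing Implicit Defensive.
Import Order.TTheory GRing.Theory.

(* An indexed stream of type I -> V: (S, q, iota, nu, ready, delta). *)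
Record istream (I V : Type) := IStream {
  st : Type;
  cur : st;
  idx : st -> I;
  val : st -> V;
  ready : st -> bool;
  next : st -> st }.

Arguments IStream {I V} st cur idx val ready next.

Section Streams.
Variables (d : Order.disp_t) (I : orderType d) (V : Type).
Implicit Types (x : istream I V).

Definition reachable x (r : st x) := exists k : nat, r = iter k (@next _ _ x) (cur x).
Definition reachable_from x (q r : st x) := exists k : nat, r = iter k (@next _ _ x) q.
Definition terminal x (r : st x) := next r = r.

Definition finite_stream x :=
  (exists t : st x, reachable t /\ terminal t) /\
  (forall t : st x, reachable t -> terminal t -> ready t = false).

Definition monotonic x :=
  forall r : st x, reachable r -> (idx r <= idx (next r))%O.

Definition reduced x :=
  forall r s : st x, reachable r -> reachable_from r s ->
    ready r = true -> ready s = true -> idx r = idx s -> r = s.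

Definition simple x := [/\ finite_stream x, monotonic x & reduced x].

Definition state_le (x y : istream I V) (a : st x) (b : st y) : bool :=
  (idx a < idx b)%O || ((idx a == idx b) && ~~ ready a).

Definition sprod (mul : V -> V -> V) x y : istream I V :=
  IStream (st x * st y)%type (cur x, cur y)
    (fun p => Order.max (idx p.1) (idx p.2))
    (fun p => mul (val p.1) (val p.2))
    (fun p => [&& ready p.1, ready p.2 & idx p.1 == idx p.2])
    (fun p => if state_le p.1 p.2 then (next p.1, p.2) else (p.1, next p.2)).
End Streams.

(* Nested streams over index sets I k (k = 1..m) and a semiring R.
   rnstream a is the type of "raw" nested streams (no simplicity requirement);
   nested a x expresses x \in S_a. *)
Section Nested.
Variables (d : nat -> Order.disp_t) (I : forall k, finOrderType (d k))
          (R : pzSemiRingType).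

Fixpoint rnstream (a : seq nat) : Type :=
  match a with
  | [::] => R
  | i :: a' => istream (I i) (rnstream a')
  end.

Fixpoint nested (a : seq nat) : rnstream a -> Prop :=
  match a return rnstream a -> Prop with
  | [::] => fun _ => True
  | i :: a' => fun x => simple x /\ forall s : st x, nested (val s)
  end.

Fixpoint nmul (a : seq nat) : rnstream a -> rnstream a -> rnstream a :=
  match a return rnstream a -> rnstream a -> rnstream a with
  | [::] => fun x y => (x * y)%R
  | i :: a' => fun x y => sprod (@nmul a') x y
  end.
End Nested.

(* The product stream advances one factor at a time, so every state reachable
   in the product is a pair of states reachable in the factors.  Monotonicity
   and reducedness then transfer componentwise (a ready product state has equal,
   ready components), and the product terminates because each step of a
   non-terminal product advances a factor that has not yet terminated. *)
From Pilot Require Import Defs.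
From mathcomp Require Import all_boot all_order all_algebra.
Import Order.TTheory.

Section ProductStream.
Variables (d : Order.disp_t) (I : orderType d) (V : Type) (mul : V -> V -> V)
  (x y : istream I V).
Local Notation z := (sprod mul x y).
Local Notation nx := (@Defs.next _ _ x).
Local Notation ny := (@Defs.next _ _ y).
Local Notation nz := (@Defs.next _ _ z).

Lemma iter_sprod k (p : st x) (q : st y) :
  exists k1 k2, iter k nz (p, q) = (iter k1 nx p, iter k2 ny q).
Proof.
elim: k => [|k [k1 [k2 IH]]]; first by exists 0, 0.
rewrite iterS IH /=; case: ifP => _;
  [exists k1.+1, k2 | exists k1, k2.+1]; by rewrite iterS.
Qed.

Lemma reachable_sprod (r : st z) :
  reachable r -> exists k1 k2, r = (iter k1 nx (cur x), iter k2 ny (cur y)).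
Proof. by move=> [k ->]; exact: iter_sprod. Qed.

Lemma reachable_from_sprod (p : st x) (q : st y) (s : st z) :
  @reachable_from _ _ _ z (p, q) s ->
  exists k1 k2, s = (iter k1 nx p, iter k2 ny q).
Proof. by move=> [k ->]; exact: iter_sprod. Qed.

Lemma terminal_sprod (p : st x) (q : st y) :
  @terminal _ _ _ z (p, q) -> terminal p \/ terminal q.
Proof.
rewrite /terminal /=; case: ifP => _.
  by move=> /(congr1 fst); left.
by move=> /(congr1 snd); right.
Qed.

Lemma sprod_reaches_terminal n (p : st x) (q : st y) i j : (i + j <= n)%N ->
  terminal (iter i nx p) -> terminal (iter j ny q) ->
  exists k, @terminal _ _ _ z (iter k nz (p, q)).
Proof.
elim: n p q i j => [|n IH] p q i j hij ti tj.
  move: hij ti tj; rewrite leqn0 addn_eq0 => /andP[/eqP-> /eqP->] /= tp tq.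
  by exists 0; rewrite /terminal /=; case: ifP => _; rewrite ?tp ?tq.
case hle: (state_le p q).
  case: i hij ti => [|i] hij ti; first by exists 0; rewrite /terminal /= hle ti.
  rewrite iterSr in ti; rewrite addSn in hij.
  by have [k hk] := IH _ q _ _ hij ti tj; exists k.+1; rewrite iterSr /= hle.
case: j hij tj => [|j] hij tj; first by exists 0; rewrite /terminal /= hle tj.
rewrite iterSr in tj; rewrite addnS in hij.
by have [k hk] := IH p _ _ _ hij ti tj; exists k.+1; rewrite iterSr /= hle.
Qed.

Lemma finite_sprod : finite_stream x -> finite_stream y -> finite_stream z.
Proof.
move=> [[tx [[i ->] Tx]] fx] [[ty [[j ->] Ty]] fy]; split.
  have [k hk] := @sprod_reaches_terminal (i + j) _ _ _ _ (leqnn _) Tx Ty.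
  by exists (iter k nz (cur z)); split => //; exists k.
move=> t /reachable_sprod[k1 [k2 ->]] /terminal_sprod[T1 | T2] /=.
  by rewrite (fx _ (ex_intro _ k1 erefl) T1).
by rewrite (fy _ (ex_intro _ k2 erefl) T2) andbF.
Qed.

Lemma monotonic_sprod : monotonic x -> monotonic y -> monotonic z.
Proof.
move=> mx my r /reachable_sprod[k1 [k2 ->]] /=.
have m1 := mx _ (ex_intro _ k1 erefl); have m2 := my _ (ex_intro _ k2 erefl).
by case: ifP => _ /=; rewrite ge_max !le_max ?m1 ?m2 lexx ?orbT.
Qed.

Lemma reduced_sprod : reduced x -> reduced y -> reduced z.
Proof.
move=> rx ry r s /reachable_sprod[k1 [k2 ->]] /reachable_from_sprod[j1 [j2 ->]] /=.
move=> /and3P[r1 r2 /eqP e] /and3P[s1 s2 /eqP e']; rewrite e e' !maxxx => e2.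
have e1 : idx (iter k1 nx (cur x)) = idx (iter j1 nx (iter k1 nx (cur x))).
  by rewrite e e'.
by rewrite -(rx _ _ (ex_intro _ k1 erefl) (ex_intro _ j1 erefl) r1 s1 e1)
           -(ry _ _ (ex_intro _ k2 erefl) (ex_intro _ j2 erefl) r2 s2 e2).
Qed.

Lemma simple_sprod : simple x -> simple y -> simple z.
Proof.
move=> [fx mx rx] [fy my ry].
by split; [exact: finite_sprod | exact: monotonic_sprod | exact: reduced_sprod].
Qed.

End ProductStream.

Lemma nested_nmul (dI : nat -> Order.disp_t) (I : forall k, finOrderType (dI k))
  (R : pzSemiRingType) (alpha : seq nat) (a b : rnstream I R alpha) :
  nested a -> nested b -> nested (nmul a b).
Proof.
elim: alpha a b => [|i al IH] a b //= [sa na] [sb nb].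
by split=> [|s]; [exact: simple_sprod | exact: IH (na s.1) (nb s.2)].
Qed.

(* Neither the range nor the sortedness of [alpha], nor the nonemptiness of the
   index sets, is needed: closure under products holds for every index sequence. *)
Theorem mainTheorem5 (R : pzSemiRingType) (m : nat) (hm : (1 <= m)%N)
  (d : nat -> Order.disp_t) (I : forall k, finOrderType (d k))
  (hI : forall k, (1 <= k <= m)%N -> (0 < #|I k|)%N)
  (alpha : seq nat)
  (halpha : all (fun k => (1 <= k <= m)%N) alpha /\ sorted ltn alpha)
  (a b : rnstream I R alpha) :
  nested a -> nested b -> nested (nmul a b).
Proof. exact: nested_nmul. Qed.
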